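(* Let $q:\mathbb{D}\to\mathbb{C}$, $q(z)=\frac{|1-z|^2}{1-|z|^2}$, and let $g,\tilde g$ be entire functions. Then for all $n\ge0$ and $z\in\mathbb{D}$, $$D^n(g\circ q)(z)=(-1)^n\frac{(1-\bar z)^{2n}}{(1-|z|^2)^n}(g^{(n)}\circ q)(z),\qquad \overline{D}^n(g\circ q)(z)=(-1)^n\frac{(1-z)^{2n}}{(1-|z|^2)^n}(g^{(n)}\circ q)(z),$$ and consequently $\overline{D}^n(g\circ q)\,D^n(\tilde g\circ q)=q^{2n}\,(g^{(n)}\circ q)\,(\tilde g^{(n)}\circ q)$.
   Context: $\mathbb{D}=\{z\in\mathbb{C}:|z|<1\}$. Peschl–Minda derivatives: for $z\in\mathbb{D}$ let $T_z(u)=(z+u)/(1+\bar z u)$; with $\partial=\frac12(\partial_x-i\partial_y)$ the Wirtinger derivative, for smooth $f:\mathbb{D}\to\mathbb{C}$ set $D^nf(z):=\partial_u^n(f\circ T_z)(0)$ and $\overline{D}^nf(z):=\overline{D^n(\bar f)(z)}$. (One has $D^{n+1}f(z)=(1-|z|^2)\,\partial^{n+1}\big[(1-|z|^2)^nf(z)\big]$.) *)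

From Stdlib Require Import Reals.
From Coquelicot Require Export Coquelicot.
Open Scope C_scope.

Definition dX (h : C -> C) (u : C) : C :=
  (Derive (fun t => Re (h (u + RtoC t))) 0%R,
   Derive (fun t => Im (h (u + RtoC t))) 0%R).
Definition dY (h : C -> C) (u : C) : C :=
  (Derive (fun t => Re (h (u + Ci * RtoC t))) 0%R,
   Derive (fun t => Im (h (u + Ci * RtoC t))) 0%R).

Definition wirt (h : C -> C) : C -> C := fun u => / 2 * (dX h u - Ci * dY h u).
Definition wirt_n (n : nat) (h : C -> C) : C -> C := Nat.iter n wirt h.

Definition Tz (z u : C) : C := (z + u) / (1 + Cconj z * u).

Definition PM (n : nat) (f : C -> C) (z : C) : C := wirt_n n (fun u => f (Tz z u)) 0.
Definition PMbar (n : nat) (f : C -> C) (z : C) : C :=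
  Cconj (PM n (fun w => Cconj (f w)) z).

Definition Cderiv_n (n : nat) (g : C -> C) : C -> C := Nat.iter n C_derive g.

Definition entire (g : C -> C) : Prop :=
  forall n z, ex_derive (K := C_AbsRing) (Cderiv_n n g) z.

Definition qfun (z : C) : C := RtoC ((Cmod (1 - z)) ^ 2 / (1 - (Cmod z) ^ 2))%R.

From Stdlib Require Import Reals Lra.
From Coquelicot Require Import Coquelicot.
Open Scope C_scope.

(* Fix z in the disc and put a = 1 - z, c = 1/(1 - |z|^2).  On the disc the
   pullback of q by T_z is the real function
       Q(w) = q(T_z w) = (a - ā w)(ā - a w̄) c / (1 - |w|^2)          [qfun_Tz]
   with Wirtinger derivative ∂Q(w) = -(ā - a w̄)^2 c / (1 - |w|^2)^2, whose
   own ∂ is divisible by w̄.  For phi_k = g^(k) (or its conjugate) the chain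
   rule along real paths gives ∂(phi_k ∘ Q) = (phi_(k+1) ∘ Q) ∂Q, and an
   induction yields ∂^n(phi_0 ∘ Q)(w) = phi_n(Q w) (∂Q w)^n + w̄ Rem(w), where
   Rem lies in an algebra of expressions closed under Wirtinger
   differentiation [wirt_n_pullback].  At w = 0 this is
   D^n(g ∘ q)(z) = g^(n)(q z) (-(1 - z̄)^2/(1 - |z|^2))^n, the conjugate
   derivative is obtained with phi_k = conj ∘ g^(k), and the product formula
   follows from q(z) = |1 - z|^2/(1 - |z|^2). *)

Definition path_derive (f : R -> C) (t : R) (d : C) : Prop :=
  is_derive (K := R_AbsRing) (V := C_R_NormedModule) f t d.

Lemma path_derive_fst f t d : path_derive f t d -> is_derive (fun s => fst (f s)) t (fst d).
Proof.
  intros H. unfold path_derive, is_derive in *.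
  pose proof (@filterdiff_comp R_AbsRing R_NormedModule C_R_NormedModule R_NormedModule
     (locally t) _ f (fun p => fst p) _ (fun p => fst p) H
     (filterdiff_linear _ (is_linear_fst (U := R_NormedModule) (V := R_NormedModule)))) as Hc.
  eapply filterdiff_ext_lin; [exact Hc | reflexivity].
Qed.

Lemma path_derive_snd f t d : path_derive f t d -> is_derive (fun s => snd (f s)) t (snd d).
Proof.
  intros H. unfold path_derive, is_derive in *.
  pose proof (@filterdiff_comp R_AbsRing R_NormedModule C_R_NormedModule R_NormedModule
     (locally t) _ f (fun p => snd p) _ (fun p => snd p) H
     (filterdiff_linear _ (is_linear_snd (U := R_NormedModule) (V := R_NormedModule)))) as Hc.
  eapply filterdiff_ext_lin; [exact Hc | reflexivity].
Qed.

Lemma path_derive_pair f t d :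
  is_derive (fun s => fst (f s)) t (fst d) -> is_derive (fun s => snd (f s)) t (snd d) ->
  path_derive f t d.
Proof.
  intros H1 H2. unfold path_derive, is_derive in *.
  pose proof (@filterdiff_comp'_2 R_AbsRing R_NormedModule R_NormedModule R_NormedModule
    C_R_NormedModule (fun s => fst (f s)) (fun s => snd (f s)) (fun a b => (a, b)) t _ _
    (fun a b => (a, b)) H1 H2) as Hc.
  assert (Hpair : filterdiff (K := R_AbsRing)
     (fun p : prod_NormedModule R_AbsRing R_NormedModule R_NormedModule =>
        ((fst p, snd p) : C_R_NormedModule))
     (locally (fst (f t), snd (f t))) (fun p => ((fst p, snd p) : C_R_NormedModule))).
  { apply filterdiff_linear. split; [reflexivity | reflexivity |].
    exists 1%R. split; [lra |]. intros [x1 x2]. rewrite Rmult_1_l. apply Rle_refl. }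
  eapply filterdiff_ext_lin.
  - eapply filterdiff_ext; [| exact (Hc Hpair)]. intros s. simpl. now destruct (f s).
  - intros y. simpl. now destruct d.
Qed.

Lemma path_derive_eq f t d d' : path_derive f t d -> d = d' -> path_derive f t d'.
Proof. now intros H <-. Qed.

Lemma path_derive_ext f g t d : (forall s, f s = g s) -> path_derive f t d -> path_derive g t d.
Proof. intros He H. unfold path_derive in *. eapply is_derive_ext; [exact He | exact H]. Qed.

Lemma path_derive_const c t : path_derive (fun _ => c) t 0.
Proof. apply path_derive_pair; apply (is_derive_const (K := R_AbsRing) (V := R_NormedModule)). Qed.

Lemma path_derive_RtoC t : path_derive RtoC t 1.
Proof.
  apply path_derive_pair; cbn.
  - apply (is_derive_id (K := R_AbsRing)).
  - apply (is_derive_const (K := R_AbsRing) (V := R_NormedModule)).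
Qed.

Lemma path_derive_plus F G t dF dG :
  path_derive F t dF -> path_derive G t dG -> path_derive (fun s => F s + G s) t (dF + dG).
Proof.
  intros HF HG. apply path_derive_pair; cbn;
    apply (is_derive_plus (K := R_AbsRing) (V := R_NormedModule)).
  all: first [apply path_derive_fst | apply path_derive_snd]; assumption.
Qed.

Lemma path_derive_mult F G t dF dG : path_derive F t dF -> path_derive G t dG ->
  path_derive (fun s => F s * G s) t (dF * G t + F t * dG).
Proof.
  intros HF HG.
  pose proof (path_derive_fst _ _ _ HF) as F1. pose proof (path_derive_snd _ _ _ HF) as F2.
  pose proof (path_derive_fst _ _ _ HG) as G1. pose proof (path_derive_snd _ _ _ HG) as G2.
  assert (Hmul : forall u v du dv, is_derive u t du -> is_derive v t dv ->
            is_derive (fun s => u s * v s)%R t (du * v t + u t * dv)%R).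
  { intros u v du dv Hu Hv.
    replace (du * v t + u t * dv)%R with (plus (mult du (v t)) (mult (u t) dv))
      by (unfold plus, mult; cbn; ring).
    apply (is_derive_mult (K := R_AbsRing)); [exact Hu | exact Hv | intros; apply Rmult_comm]. }
  apply path_derive_pair; cbn.
  - replace (fst dF * fst (G t) - snd dF * snd (G t) + (fst (F t) * fst dG - snd (F t) * snd dG))%R
      with ((fst dF * fst (G t) + fst (F t) * fst dG) - (snd dF * snd (G t) + snd (F t) * snd dG))%R
      by ring.
    apply (is_derive_minus (K := R_AbsRing) (V := R_NormedModule)); apply Hmul; assumption.
  - replace (fst dF * snd (G t) + snd dF * fst (G t) + (fst (F t) * snd dG + snd (F t) * fst dG))%R
      with ((fst dF * snd (G t) + fst (F t) * snd dG) + (snd dF * fst (G t) + snd (F t) * fst dG))%R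
      by ring.
    apply (is_derive_plus (K := R_AbsRing) (V := R_NormedModule)); apply Hmul; assumption.
Qed.

Lemma path_derive_conj F t d : path_derive F t d -> path_derive (fun s => Cconj (F s)) t (Cconj d).
Proof.
  intros H. apply path_derive_pair; cbn.
  - now apply path_derive_fst.
  - apply (is_derive_opp (K := R_AbsRing) (V := R_NormedModule)). now apply path_derive_snd.
Qed.

Lemma line_at_0 (w v : C) : w + RtoC 0 * v = w.
Proof. destruct w, v; apply injective_projections; simpl; ring. Qed.

Lemma path_derive_line (w v : C) t : path_derive (fun s => w + RtoC s * v) t v.
Proof.
  eapply path_derive_eq.
  - apply path_derive_plus; [apply path_derive_const |].
    apply path_derive_mult; [apply path_derive_RtoC | apply path_derive_const].
  - cbv beta. ring.
Qed.

Lemma real_path_derive_real G t d :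
  path_derive G t d -> (forall s, snd (G s) = 0%R) -> snd d = 0%R.
Proof.
  intros H Hr.
  assert (H0 : is_derive (fun s => snd (G s)) t 0%R).
  { eapply is_derive_ext; [intros s; symmetry; apply Hr |].
    apply (is_derive_const (K := R_AbsRing) (V := R_NormedModule)). }
  rewrite <- (is_derive_unique _ _ _ (path_derive_snd _ _ _ H)).
  exact (is_derive_unique _ _ _ H0).
Qed.

Lemma Cinv_RtoC (x : R) : / RtoC x = RtoC (/ x).
Proof.
  destruct (Req_dec x 0) as [-> | Hx].
  - rewrite Rinv_0. apply injective_projections; simpl; unfold Rdiv; rewrite ?Rinv_0; ring.
  - symmetry. now apply RtoC_inv.
Qed.

Lemma path_derive_inv_real G t d : path_derive G t d -> (forall s, snd (G s) = 0%R) ->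
  fst (G t) <> 0%R -> path_derive (fun s => / G s) t (- d / (G t * G t)).
Proof.
  intros H Hr Hn.
  assert (HG : forall s, G s = RtoC (fst (G s))).
  { intros s. specialize (Hr s). destruct (G s); simpl in *; now subst. }
  assert (Hd : d = RtoC (fst d)).
  { pose proof (real_path_derive_real _ _ _ H Hr). destruct d; simpl in *; now subst. }
  apply path_derive_ext with (f := fun s => RtoC (/ fst (G s))).
  { intros s. now rewrite (HG s) at 2; rewrite Cinv_RtoC. }
  apply path_derive_eq with (d := RtoC (- fst d / (fst (G t)) ^ 2)).
  - apply path_derive_pair; cbn.
    + apply is_derive_inv; [now apply path_derive_fst | exact Hn].
    + apply (is_derive_const (K := R_AbsRing) (V := R_NormedModule)).
  - rewrite Hd, (HG t), <- RtoC_mult, <- RtoC_opp, <- RtoC_div.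
    + simpl. now rewrite Rmult_1_r.
    + now apply Rmult_integral_contrapositive_currified.
Qed.

Lemma norm_C_R (x : C) : @norm R_AbsRing C_R_NormedModule x = Cmod x.
Proof.
  destruct x as [x1 x2].
  change (prod_norm (K := R_AbsRing) (U := R_NormedModule) (V := R_NormedModule) (x1, x2)
          = Cmod (x1, x2)).
  unfold prod_norm, Cmod; cbn [fst snd]. f_equal.
  change (Rabs x1 ^ 2 + Rabs x2 ^ 2 = x1 ^ 2 + x2 ^ 2)%R.
  now rewrite <- !Rsqr_pow2, <- !Rsqr_abs.
Qed.

Lemma C_derive_real_differential g w a : is_derive (K := C_AbsRing) g w a ->
  filterdiff (K := R_AbsRing) (U := C_R_NormedModule) (V := C_R_NormedModule) g
    (@locally C_UniformSpace w) (fun h => h * a).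
Proof.
  intros [_ HD]. split.
  - split.
    + intros [x1 x2] [y1 y2]. destruct a. apply injective_projections; cbn; ring.
    + intros k [x1 x2]. destruct a. apply injective_projections; cbn; ring.
    + exists (Cmod a + 1)%R. pose proof (Cmod_ge_0 a). split; [lra |].
      intros x. rewrite !norm_C_R, Cmod_mult. pose proof (Cmod_ge_0 x). nra.
  - intros x Hx.
    assert (x = w) as ->.
    { symmetry. now apply (is_filter_lim_locally_unique (K := R_AbsRing) (V := C_R_NormedModule)). }
    intros eps. apply locally_C.
    eapply filter_imp; [| exact (HD w (fun P H => H) eps)].
    intros y Hy. now rewrite !norm_C_R.
Qed.

Lemma path_derive_comp (g : C -> C) a (gamma : R -> C) t d :
  is_derive (K := C_AbsRing) g (gamma t) a -> path_derive gamma t d ->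
  path_derive (fun s => g (gamma s)) t (a * d).
Proof.
  intros Hg Hgamma. unfold path_derive, is_derive in *.
  eapply filterdiff_ext_lin.
  - exact (@filterdiff_comp' R_AbsRing R_NormedModule C_R_NormedModule C_R_NormedModule
             gamma g t _ _ Hgamma (C_derive_real_differential _ _ _ Hg)).
  - intros y. simpl. destruct d, a. apply injective_projections; cbn; ring.
Qed.

(* [has_wirtinger F A B]: on the unit disc, [F] has Wirtinger derivatives
   [∂F = A] and [∂̄F = B], expressed through the derivatives of [F] along all
   real lines: d/ds F(w + s v) at s = 0 equals A(w) v + B(w) v̄. *)
Definition has_wirtinger (F A B : C -> C) : Prop :=
  forall w, (Cmod w < 1)%R -> forall v,
    path_derive (fun s => F (w + RtoC s * v)) 0 (A w * v + B w * Cconj v).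

Lemma has_wirtinger_ext F A B A' B' : has_wirtinger F A B ->
  (forall w, (Cmod w < 1)%R -> A w = A' w /\ B w = B' w) -> has_wirtinger F A' B'.
Proof. intros H He w Hw v. destruct (He w Hw) as [<- <-]. now apply H. Qed.

Lemma has_wirtinger_fun_ext F F' A B :
  (forall w, F w = F' w) -> has_wirtinger F A B -> has_wirtinger F' A B.
Proof. intros He H w Hw v. eapply path_derive_ext; [intros s; apply He | now apply H]. Qed.

Lemma has_wirtinger_const c : has_wirtinger (fun _ => c) (fun _ => 0) (fun _ => 0).
Proof. intros w _ v. eapply path_derive_eq; [apply path_derive_const | ring]. Qed.

Lemma has_wirtinger_id : has_wirtinger (fun w => w) (fun _ => 1) (fun _ => 0).
Proof. intros w _ v. eapply path_derive_eq; [apply path_derive_line | ring]. Qed.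

Lemma has_wirtinger_conj : has_wirtinger Cconj (fun _ => 0) (fun _ => 1).
Proof.
  intros w _ v. eapply path_derive_eq; [apply path_derive_conj, path_derive_line | ring].
Qed.

Lemma has_wirtinger_plus F G AF BF AG BG : has_wirtinger F AF BF -> has_wirtinger G AG BG ->
  has_wirtinger (fun w => F w + G w) (fun w => AF w + AG w) (fun w => BF w + BG w).
Proof.
  intros HF HG w Hw v.
  eapply path_derive_eq; [apply path_derive_plus; [apply HF | apply HG]; exact Hw | ring].
Qed.

Lemma has_wirtinger_mult F G AF BF AG BG : has_wirtinger F AF BF -> has_wirtinger G AG BG ->
  has_wirtinger (fun w => F w * G w)
    (fun w => AF w * G w + F w * AG w) (fun w => BF w * G w + F w * BG w).
Proof.
  intros HF HG w Hw v.
  eapply path_derive_eq; [apply path_derive_mult; [apply HF | apply HG]; exact Hw |].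
  cbv beta. rewrite !line_at_0. ring.
Qed.

Lemma has_wirtinger_opp F A B : has_wirtinger F A B ->
  has_wirtinger (fun w => - F w) (fun w => - A w) (fun w => - B w).
Proof.
  intros HF. eapply has_wirtinger_ext.
  - eapply has_wirtinger_fun_ext;
      [| apply has_wirtinger_mult; [apply (has_wirtinger_const (-1)) | exact HF]].
    intros w. cbv beta. ring.
  - intros w _. split; ring.
Qed.

Lemma has_wirtinger_minus F G AF BF AG BG : has_wirtinger F AF BF -> has_wirtinger G AG BG ->
  has_wirtinger (fun w => F w - G w) (fun w => AF w - AG w) (fun w => BF w - BG w).
Proof. intros HF HG. now apply has_wirtinger_plus, has_wirtinger_opp. Qed.

Lemma has_wirtinger_pow F A B n : has_wirtinger F A B ->
  has_wirtinger (fun w => F w ^ n) (fun w => RtoC (INR n) * F w ^ pred n * A w)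
                                   (fun w => RtoC (INR n) * F w ^ pred n * B w).
Proof.
  intros HF. induction n as [| n IHn].
  - eapply has_wirtinger_ext; [apply (has_wirtinger_const 1) |].
    intros w _. simpl INR. split; ring.
  - eapply has_wirtinger_ext; [exact (has_wirtinger_mult _ _ _ _ _ _ HF IHn) |].
    intros w _. rewrite S_INR, RtoC_plus.
    destruct n as [| m]; simpl pred; simpl INR; rewrite ?Cpow_S; split; ring.
Qed.

Definition poinc (w : C) : C := / (1 - w * Cconj w).

Lemma snd_one_minus_norm (x : C) : snd (1 - x * Cconj x) = 0%R.
Proof. destruct x; simpl; ring. Qed.

Lemma fst_one_minus_norm (x : C) : fst (1 - x * Cconj x) = (1 - Cmod x ^ 2)%R.
Proof.
  destruct x as [x1 x2]. unfold Cmod. rewrite pow2_sqrt; [simpl; ring |].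
  apply Rplus_le_le_0_compat; apply pow2_ge_0.
Qed.

Lemma one_minus_norm_sq_neq0 (w : C) : (Cmod w < 1)%R -> (1 - Cmod w ^ 2)%R <> 0%R.
Proof. intros H. pose proof (Cmod_ge_0 w). nra. Qed.

Lemma one_minus_norm_neq0 (w : C) : (Cmod w < 1)%R -> 1 - w * Cconj w <> 0.
Proof.
  intros H He. apply (one_minus_norm_sq_neq0 w H). now rewrite <- fst_one_minus_norm, He.
Qed.

Lemma one_minus_norm_RtoC (x : C) : RtoC (1 - Cmod x ^ 2) = 1 - x * Cconj x.
Proof. now rewrite RtoC_minus, Cmod2_conj. Qed.

Lemma poinc_RtoC (w : C) : poinc w = RtoC (/ (1 - Cmod w ^ 2)).
Proof. now rewrite <- Cinv_RtoC, one_minus_norm_RtoC. Qed.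

Lemma poinc_0 : poinc 0 = 1.
Proof. rewrite poinc_RtoC, Cmod_0. apply injective_projections; simpl; field. Qed.

Lemma has_wirtinger_poinc :
  has_wirtinger poinc (fun w => Cconj w * (poinc w * poinc w)) (fun w => w * (poinc w * poinc w)).
Proof.
  assert (HN : has_wirtinger (fun w => 1 - w * Cconj w) (fun w => - Cconj w) (fun w => - w)).
  { eapply has_wirtinger_ext.
    - apply has_wirtinger_minus; [apply has_wirtinger_const |].
      apply has_wirtinger_mult; [apply has_wirtinger_id | apply has_wirtinger_conj].
    - intros w _. split; ring. }
  intros w Hw v. unfold poinc.
  eapply path_derive_eq.
  - apply path_derive_inv_real; [now apply HN | intros s; apply snd_one_minus_norm |].
    cbv beta. rewrite line_at_0, fst_one_minus_norm. now apply one_minus_norm_sq_neq0.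
  - cbv beta. rewrite line_at_0. pose proof (one_minus_norm_neq0 w Hw) as Hn.
    (* Naming [Cconj w] keeps [field] from unfolding it into real components. *)
    set (wb := Cconj w) in *. field. exact Hn.
Qed.

Ltac wirtinger_rules :=
  repeat lazymatch goal with
  | |- has_wirtinger (fun _ => ?c) _ _ => apply (has_wirtinger_const c)
  | |- has_wirtinger (fun w => w) _ _ => apply has_wirtinger_id
  | |- has_wirtinger (fun w => Cconj w) _ _ => apply has_wirtinger_conj
  | |- has_wirtinger (fun w => poinc w) _ _ => apply has_wirtinger_poinc
  | |- has_wirtinger (fun w => @?F w - @?G w) _ _ => eapply (has_wirtinger_minus F G)
  | |- has_wirtinger (fun w => @?F w + @?G w) _ _ => eapply (has_wirtinger_plus F G)
  | |- has_wirtinger (fun w => @?F w * @?G w) _ _ => eapply (has_wirtinger_mult F G)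
  | |- has_wirtinger (fun w => - @?F w) _ _ => eapply (has_wirtinger_opp F)
  end.

(* With [a = 1 - z] and [c = 1/(1 - |z|^2)], [qpull a c = q ∘ T_z] on the disc
   (lemma [qfun_Tz]); [dqpull] and [dbqpull] are its two Wirtinger derivatives. *)
Definition qpull (a : C) (c : R) (w : C) : C :=
  (a - Cconj a * w) * (Cconj a - a * Cconj w) * RtoC c * poinc w.
Definition dqpull (a : C) (c : R) (w : C) : C :=
  - ((Cconj a - a * Cconj w) * (Cconj a - a * Cconj w)) * (poinc w * poinc w) * RtoC c.
Definition dbqpull (a : C) (c : R) (w : C) : C :=
  - ((a - Cconj a * w) * (a - Cconj a * w)) * (poinc w * poinc w) * RtoC c.

Lemma has_wirtinger_qpull a c : has_wirtinger (qpull a c) (dqpull a c) (dbqpull a c).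
Proof.
  unfold qpull. eapply has_wirtinger_ext; [wirtinger_rules |].
  intros w Hw. pose proof (one_minus_norm_neq0 w Hw) as Hn.
  unfold dqpull, dbqpull, poinc. cbv beta. set (wb := Cconj w) in *.
  split; field; exact Hn.
Qed.

(* [dqpull] depends on [w] only through [w̄] and [poinc w], so its [∂] is [w̄]
   times [dqpull_coef]; this factor makes the remainder in [wirt_n_pullback]
   vanish at [w = 0]. *)
Definition dqpull_coef (a : C) (c : R) (w : C) : C :=
  -2 * ((Cconj a - a * Cconj w) * (Cconj a - a * Cconj w))
     * (poinc w * poinc w * poinc w) * RtoC c.

Lemma has_wirtinger_dqpull a c :
  exists B, has_wirtinger (dqpull a c) (fun w => Cconj w * dqpull_coef a c w) B.
Proof.
  eexists. unfold dqpull. eapply has_wirtinger_ext; [wirtinger_rules |].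
  intros w _. unfold dqpull_coef. cbv beta. split; [ring | reflexivity].
Qed.

Lemma qpull_real a c w : snd (qpull a c w) = 0%R.
Proof.
  assert (Hmul : forall x y, snd x = 0%R -> snd y = 0%R -> snd (x * y) = 0%R).
  { intros [x1 x2] [y1 y2]. simpl. intros -> ->. ring. }
  unfold qpull. rewrite poinc_RtoC. apply Hmul; [apply Hmul; [| reflexivity] | reflexivity].
  replace (Cconj a - a * Cconj w) with (Cconj (a - Cconj a * w))
    by now rewrite Cminus_conj, Cmult_conj, Cconj_conj.
  destruct (a - Cconj a * w). simpl. ring.
Qed.

Lemma one_plus_neq0 (x : C) : (Cmod x < 1)%R -> 1 + x <> 0.
Proof.
  intros H He. assert (x = -1) as ->.
  { replace x with ((1 + x) - 1) by ring. rewrite He. ring. }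
  rewrite Cmod_R, Rabs_left in H; lra.
Qed.

Lemma Cmod_mult_lt1 (x y : C) : (Cmod x < 1)%R -> (Cmod y < 1)%R -> (Cmod (x * y) < 1)%R.
Proof.
  intros Hx Hy. rewrite Cmod_mult. pose proof (Cmod_ge_0 x). pose proof (Cmod_ge_0 y). nra.
Qed.

Lemma Cconj_1 : Cconj 1 = 1.
Proof. apply injective_projections; simpl; ring. Qed.

Lemma Cconj_one_minus z : Cconj (1 - z) = 1 - Cconj z.
Proof. now rewrite Cminus_conj, Cconj_1. Qed.

Lemma qfun_Tz z w : (Cmod z < 1)%R -> (Cmod w < 1)%R ->
  qfun (Tz z w) = qpull (1 - z) (/ (1 - Cmod z ^ 2)) w.
Proof.
  intros Hz Hw.
  assert (H1 : 1 + Cconj z * w <> 0).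
  { apply one_plus_neq0, Cmod_mult_lt1; rewrite ?Cmod_conj; assumption. }
  assert (H2 : 1 + z * Cconj w <> 0).
  { apply one_plus_neq0, Cmod_mult_lt1; rewrite ?Cmod_conj; assumption. }
  pose proof (one_minus_norm_neq0 z Hz) as H3.
  pose proof (one_minus_norm_neq0 w Hw) as H4.
  assert (HT : Cconj (Tz z w) = (Cconj z + Cconj w) / (1 + z * Cconj w)).
  { unfold Tz. rewrite Cdiv_conj by exact H1.
    now rewrite !Cplus_conj, Cmult_conj, Cconj_conj, Cconj_1. }
  assert (HN : 1 - Tz z w * Cconj (Tz z w)
               = (1 - z * Cconj z) * (1 - w * Cconj w) / ((1 + Cconj z * w) * (1 + z * Cconj w))).
  { rewrite HT. unfold Tz. set (zb := Cconj z) in *. set (wb := Cconj w) in *. field. auto. }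
  assert (HN0 : (1 - Cmod (Tz z w) ^ 2)%R <> 0%R).
  { intros He. apply (Cmult_neq_0 _ _ H3 H4).
    replace ((1 - z * Cconj z) * (1 - w * Cconj w))
      with ((1 - Tz z w * Cconj (Tz z w)) * ((1 + Cconj z * w) * (1 + z * Cconj w))).
    - rewrite <- one_minus_norm_RtoC, He. ring.
    - rewrite HN. set (zb := Cconj z) in *. set (wb := Cconj w) in *. field. auto. }
  unfold qfun, qpull. rewrite RtoC_div by exact HN0.
  rewrite poinc_RtoC, <- !Cinv_RtoC, !one_minus_norm_RtoC, Cmod2_conj, HN,
    !Cminus_conj, Cconj_1, HT.
  unfold Tz. set (zb := Cconj z) in *. set (wb := Cconj w) in *. field. auto.
Qed.

Lemma qfun_eq z : qfun z = (1 - z) * Cconj (1 - z) * RtoC (/ (1 - Cmod z ^ 2)).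
Proof. unfold qfun, Rdiv. now rewrite RtoC_mult, Cmod2_conj. Qed.

(* [real_tower phi]: [phi (k+1)] is the derivative of [phi k] along real-valued
   paths.  Both [g^(k)] and [conj ∘ g^(k)] form such towers for entire [g];
   real paths suffice because [q ∘ T_z] is real-valued. *)
Definition real_tower (phi : nat -> C -> C) : Prop :=
  forall k (gamma : R -> C) d, path_derive gamma 0 d -> (forall s, snd (gamma s) = 0%R) ->
    path_derive (fun s => phi k (gamma s)) 0 (phi (S k) (gamma 0%R) * d).

Lemma real_tower_derivatives g : entire g -> real_tower (fun k => Cderiv_n k g).
Proof.
  intros Hg k gamma d Hd _.
  apply path_derive_comp; [apply (C_derive_correct _ _ 0), Hg | exact Hd].
Qed.

Lemma real_tower_conj_derivatives g : entire g -> real_tower (fun k x => Cconj (Cderiv_n k g x)).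
Proof.
  intros Hg k gamma d Hd Hr.
  eapply path_derive_eq.
  - apply path_derive_conj, path_derive_comp; [apply (C_derive_correct _ _ 0), Hg | exact Hd].
  - rewrite Cmult_conj. f_equal.
    pose proof (real_path_derive_real _ _ _ Hd Hr). destruct d; simpl in *; subst.
    apply injective_projections; simpl; ring.
Qed.

Lemma has_wirtinger_tower phi a c k : real_tower phi ->
  has_wirtinger (fun w => phi k (qpull a c w))
    (fun w => phi (S k) (qpull a c w) * dqpull a c w)
    (fun w => phi (S k) (qpull a c w) * dbqpull a c w).
Proof.
  intros Hphi w Hw v.
  eapply path_derive_eq.
  - apply Hphi; [exact (has_wirtinger_qpull a c w Hw v) | intros s; apply qpull_real].
  - cbv beta. rewrite line_at_0. ring.
Qed.

Lemma Derive_along_line F A B H w v : has_wirtinger F A B ->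
  (forall x, (Cmod x < 1)%R -> H x = F x) -> (Cmod w < 1)%R -> Cmod v = 1%R ->
  Derive (fun t => fst (H (w + RtoC t * v))) 0 = fst (A w * v + B w * Cconj v) /\
  Derive (fun t => snd (H (w + RtoC t * v))) 0 = snd (A w * v + B w * Cconj v).
Proof.
  intros HF HH Hw Hv.
  assert (Hloc : locally 0%R (fun t => H (w + RtoC t * v) = F (w + RtoC t * v))).
  { assert (He : (0 < 1 - Cmod w)%R) by lra.
    exists (mkposreal _ He). intros t Ht. apply HH.
    eapply Rle_lt_trans; [apply Cmod_triangle |].
    rewrite Cmod_mult, Hv, Cmod_R, Rmult_1_r.
    change (Rabs (t - 0) < 1 - Cmod w)%R in Ht. rewrite Rminus_0_r in Ht. simpl. lra. }
  pose proof (HF w Hw v) as Hd.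
  split.
  - rewrite (Derive_ext_loc _ (fun t => fst (F (w + RtoC t * v)))).
    + apply is_derive_unique, path_derive_fst, Hd.
    + eapply filter_imp; [| exact Hloc]. now intros t ->.
  - rewrite (Derive_ext_loc _ (fun t => snd (F (w + RtoC t * v)))).
    + apply is_derive_unique, path_derive_snd, Hd.
    + eapply filter_imp; [| exact Hloc]. now intros t ->.
Qed.

(* The partial derivatives in [wirt] are the derivatives along the directions
   [1] and [i], so [wirt] computes the holomorphic Wirtinger derivative. *)
Lemma wirt_of_has_wirtinger F A B H : has_wirtinger F A B ->
  (forall x, (Cmod x < 1)%R -> H x = F x) -> forall w, (Cmod w < 1)%R -> wirt H w = A w.
Proof.
  intros HF HH w Hw.
  destruct (Derive_along_line F A B H w 1 HF HH Hw) as [H1 H2]; [apply Cmod_1 |].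
  destruct (Derive_along_line F A B H w Ci HF HH Hw) as [H3 H4]; [apply Cmod_Ci |].
  unfold wirt, dX, dY, Re, Im.
  rewrite (Derive_ext (fun t => fst (H (w + RtoC t))) (fun t => fst (H (w + RtoC t * 1))))
    by (intros t; now rewrite Cmult_1_r).
  rewrite (Derive_ext (fun t => snd (H (w + RtoC t))) (fun t => snd (H (w + RtoC t * 1))))
    by (intros t; now rewrite Cmult_1_r).
  rewrite (Derive_ext (fun t => fst (H (w + Ci * RtoC t))) (fun t => fst (H (w + RtoC t * Ci))))
    by (intros t; now rewrite (Cmult_comm Ci)).
  rewrite (Derive_ext (fun t => snd (H (w + Ci * RtoC t))) (fun t => snd (H (w + RtoC t * Ci))))
    by (intros t; now rewrite (Cmult_comm Ci)).
  rewrite H1, H2, H3, H4, <- !surjective_pairing.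
  replace (Cconj Ci) with (- Ci) by (apply injective_projections; simpl; ring).
  destruct (A w) as [a1 a2], (B w) as [b1 b2]. apply injective_projections; simpl; field.
Qed.

(* It is closed under both
   Wirtinger derivatives ([expr_has_wirtinger]), so the remainder term in
   [wirt_n_pullback] can be differentiated again at every step. *)
Inductive expr (phi : nat -> C -> C) (a : C) (c : R) : (C -> C) -> Prop :=
| expr_const k : expr phi a c (fun _ => k)
| expr_id : expr phi a c (fun w => w)
| expr_conj : expr phi a c (fun w => Cconj w)
| expr_poinc : expr phi a c (fun w => poinc w)
| expr_tower k : expr phi a c (fun w => phi k (qpull a c w))
| expr_plus F G : expr phi a c F -> expr phi a c G -> expr phi a c (fun w => F w + G w)
| expr_mult F G : expr phi a c F -> expr phi a c G -> expr phi a c (fun w => F w * G w)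
| expr_ext F G : (forall w, F w = G w) -> expr phi a c F -> expr phi a c G.

Section Expressions.
Variables (phi : nat -> C -> C) (a : C) (c : R).

Lemma expr_opp F : expr phi a c F -> expr phi a c (fun w => - F w).
Proof.
  intros HF. apply (expr_ext _ _ _ (fun w => (-1) * F w)); [intros w; ring |].
  now apply expr_mult; [apply expr_const |].
Qed.

Lemma expr_minus F G : expr phi a c F -> expr phi a c G -> expr phi a c (fun w => F w - G w).
Proof. intros HF HG. now apply expr_plus, expr_opp. Qed.

Lemma expr_pow F n : expr phi a c F -> expr phi a c (fun w => F w ^ n).
Proof.
  intros HF. induction n as [| n IHn]; [exact (expr_const _ _ _ 1) |].
  apply (expr_ext _ _ _ (fun w => F w * F w ^ n)); [reflexivity | now apply expr_mult].
Qed.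

End Expressions.

Ltac expr_rules :=
  repeat first
    [ assumption
    | lazymatch goal with
      | |- expr _ _ _ (fun _ => ?k) => apply expr_const
      | |- expr _ _ _ (fun w => w) => apply expr_id
      | |- expr _ _ _ (fun w => Cconj w) => apply expr_conj
      | |- expr _ _ _ (fun w => poinc w) => apply expr_poinc
      | |- expr _ _ _ (fun w => _ _ (qpull _ _ w)) => apply expr_tower
      | |- expr _ _ _ (fun w => @?F w - @?G w) => apply (expr_minus _ _ _ F G)
      | |- expr _ _ _ (fun w => @?F w + @?G w) => apply (expr_plus _ _ _ F G)
      | |- expr _ _ _ (fun w => @?F w * @?G w) => apply (expr_mult _ _ _ F G)
      | |- expr _ _ _ (fun w => - @?F w) => apply (expr_opp _ _ _ F)
      | |- expr _ _ _ (fun w => @?F w ^ ?n) => apply (expr_pow _ _ _ F n)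
      end ].

Lemma expr_has_wirtinger phi a c : real_tower phi ->
  forall F, expr phi a c F -> exists A B, expr phi a c A /\ has_wirtinger F A B.
Proof.
  intros Hphi F HF.
  induction HF as [k | | | | k | F G _ [AF [BF [HAF HF]]] _ [AG [BG [HAG HG]]]
                  | F G HFe [AF [BF [HAF HF]]] HGe [AG [BG [HAG HG]]]
                  | F G HFG _ [A [B [HA HF]]]].
  - do 2 eexists. split; [| apply has_wirtinger_const]. expr_rules.
  - do 2 eexists. split; [| apply has_wirtinger_id]. expr_rules.
  - do 2 eexists. split; [| apply has_wirtinger_conj]. expr_rules.
  - do 2 eexists. split; [| apply has_wirtinger_poinc]. expr_rules.
  - do 2 eexists. split; [| apply has_wirtinger_tower, Hphi]. unfold dqpull. expr_rules.
  - do 2 eexists. split; [| apply has_wirtinger_plus; [exact HF | exact HG]]. expr_rules.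
  - do 2 eexists. split; [| apply has_wirtinger_mult; [exact HF | exact HG]]. expr_rules.
  - exists A, B. split; [exact HA | exact (has_wirtinger_fun_ext _ _ _ _ HFG HF)].
Qed.

(* Differentiating, the term [∂(dqpull^n)] carries
   a factor [w̄] (lemma [has_wirtinger_dqpull]) and is absorbed into the
   remainder, as is [∂(w̄ Rem) = w̄ ∂Rem]. *)
Lemma wirt_n_pullback phi a c h : real_tower phi ->
  (forall w, (Cmod w < 1)%R -> h w = phi 0%nat (qpull a c w)) -> forall n,
  exists Rem, expr phi a c Rem /\ forall w, (Cmod w < 1)%R ->
    wirt_n n h w = phi n (qpull a c w) * dqpull a c w ^ n + Cconj w * Rem w.
Proof.
  intros Hphi Hh n. induction n as [| n [Rem [HRem Hn]]].
  - exists (fun _ => 0). split; [apply expr_const |].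
    intros w Hw. simpl. rewrite Hh by exact Hw. ring.
  - destruct (expr_has_wirtinger _ _ _ Hphi Rem HRem) as (ARem & BRem & HARem & HRemD).
    destruct (has_wirtinger_dqpull a c) as [B HQD].
    pose proof (has_wirtinger_plus _ _ _ _ _ _
       (has_wirtinger_mult _ _ _ _ _ _ (has_wirtinger_tower phi a c n Hphi)
          (has_wirtinger_pow _ _ _ n HQD))
       (has_wirtinger_mult _ _ _ _ _ _ has_wirtinger_conj HRemD)) as Hstep.
    exists (fun w => phi n (qpull a c w)
                       * (RtoC (INR n) * dqpull a c w ^ pred n * dqpull_coef a c w)
                     + ARem w).
    split.
    + unfold dqpull, dqpull_coef. expr_rules.
    + intros w Hw. change (wirt_n (S n) h w) with (wirt (wirt_n n h) w).
      rewrite (wirt_of_has_wirtinger _ _ _ _ Hstep Hn w Hw). simpl. ring.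
Qed.

(* At the origin the remainder disappears. *)
Lemma wirt_n_pullback_at_0 phi a c h n : real_tower phi ->
  (forall w, (Cmod w < 1)%R -> h w = phi 0%nat (qpull a c w)) ->
  wirt_n n h 0 = phi n (a * Cconj a * RtoC c) * (- (Cconj a * Cconj a) * RtoC c) ^ n.
Proof.
  intros Hphi Hh.
  destruct (wirt_n_pullback phi a c h Hphi Hh n) as (Rem & _ & HRem).
  rewrite HRem by (rewrite Cmod_0; lra).
  unfold qpull, dqpull. rewrite poinc_0.
  replace (Cconj 0) with (RtoC 0) by (apply injective_projections; simpl; ring).
  rewrite Cmult_0_l, Cplus_0_r. f_equal; [f_equal | f_equal]; ring.
Qed.

Lemma pow_neg_sq_div (x : C) (r : R) n : r <> 0%R ->
  (- (x * x) * RtoC (/ r)) ^ n = (-1) ^ n * x ^ (2 * n) / RtoC r ^ n.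
Proof.
  intros Hr. assert (Hr' : RtoC r <> 0) by (intros He; apply Hr; now apply RtoC_inj).
  rewrite RtoC_inv by exact Hr.
  replace (- (x * x) * / RtoC r) with ((-1) * x ^ 2 * / RtoC r) by (simpl; ring).
  rewrite !Cpow_mult_l, Cpow_inv, Cpow_mult_r by exact Hr'. unfold Cdiv. ring.
Qed.

Lemma PM_formula g z n : entire g -> (Cmod z < 1)%R ->
  PM n (fun w => g (qfun w)) z
  = (-1) ^ n * (1 - Cconj z) ^ (2 * n) / RtoC (1 - Cmod z ^ 2) ^ n * Cderiv_n n g (qfun z).
Proof.
  intros Hg Hz. unfold PM.
  rewrite (wirt_n_pullback_at_0 _ (1 - z) (/ (1 - Cmod z ^ 2)) _ n (real_tower_derivatives g Hg))
    by (intros w Hw; simpl; now rewrite qfun_Tz).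
  rewrite <- qfun_eq, Cconj_one_minus, pow_neg_sq_div by now apply one_minus_norm_sq_neq0.
  apply Cmult_comm.
Qed.

Lemma PMbar_formula g z n : entire g -> (Cmod z < 1)%R ->
  PMbar n (fun w => g (qfun w)) z
  = (-1) ^ n * (1 - z) ^ (2 * n) / RtoC (1 - Cmod z ^ 2) ^ n * Cderiv_n n g (qfun z).
Proof.
  intros Hg Hz. unfold PMbar, PM.
  rewrite (wirt_n_pullback_at_0 _ (1 - z) (/ (1 - Cmod z ^ 2)) _ n
             (real_tower_conj_derivatives g Hg))
    by (intros w Hw; simpl; now rewrite qfun_Tz).
  rewrite <- qfun_eq, Cmult_conj, Cconj_conj, Cpow_conj.
  replace (Cconj (- (Cconj (1 - z) * Cconj (1 - z)) * RtoC (/ (1 - Cmod z ^ 2))))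
    with (- ((1 - z) * (1 - z)) * RtoC (/ (1 - Cmod z ^ 2)))
    by (apply injective_projections; simpl; ring).
  rewrite pow_neg_sq_div by now apply one_minus_norm_sq_neq0.
  apply Cmult_comm.
Qed.

Lemma weights_product z n : (Cmod z < 1)%R ->
  (-1) ^ n * (1 - z) ^ (2 * n) / RtoC (1 - Cmod z ^ 2) ^ n
  * ((-1) ^ n * (1 - Cconj z) ^ (2 * n) / RtoC (1 - Cmod z ^ 2) ^ n) = qfun z ^ (2 * n).
Proof.
  intros Hz. rewrite <- !pow_neg_sq_div, <- Cpow_mult_l, Cpow_mult_r, qfun_eq, Cconj_one_minus
    by now apply one_minus_norm_sq_neq0.
  f_equal. simpl. ring.
Qed.

Theorem mainTheorem15 (g gt : C -> C) (Hg : entire g) (Hgt : entire gt) :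
  forall (n : nat) (z : C), (Cmod z < 1)%R ->
    PM n (fun w => g (qfun w)) z
      = (- 1) ^ n * (1 - Cconj z) ^ (2 * n) / (RtoC (1 - Cmod z ^ 2)) ^ n
        * Cderiv_n n g (qfun z)
    /\ PMbar n (fun w => g (qfun w)) z
      = (- 1) ^ n * (1 - z) ^ (2 * n) / (RtoC (1 - Cmod z ^ 2)) ^ n
        * Cderiv_n n g (qfun z)
    /\ PMbar n (fun w => g (qfun w)) z * PM n (fun w => gt (qfun w)) z
      = qfun z ^ (2 * n) * Cderiv_n n g (qfun z) * Cderiv_n n gt (qfun z).
Proof.
  intros n z Hz.
  split; [| split].
  - now apply PM_formula.
  - now apply PMbar_formula.
  - rewrite PMbar_formula, PM_formula, <- (weights_product z n Hz) by assumption. ring.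
Qed.
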